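(* For every $k\ge 2$, the odd graph $O_k$ has no quantum symmetry, i.e. $C(G_{aut}^+(O_k))$ is commutative.
   Context: The odd graph $O_k$ ($k\ge2$) has as vertices the $(k-1)$-element subsets of $\{1,\dots,2k-1\}$, two vertices being adjacent iff the subsets are disjoint. For a finite simple undirected graph $\Gamma=(V,E)$ with $V=\{1,\dots,n\}$, $C(G_{aut}^+(\Gamma))$ is the universal unital $C^*$-algebra generated by $u_{ij}$, $1\le i,j\le n$, with relations: (R1) $u_{ij}=u_{ij}^*=u_{ij}^2$; (R2) $\sum_{l} u_{il}=1=\sum_{l} u_{li}$ for all $i$; (R3) $u_{ij}u_{kl}=u_{kl}u_{ij}=0$ whenever exactly one of $(i,k)\in E$, $(j,l)\in E$ holds. $\Gamma$ has no quantum symmetry if $C(G_{aut}^+(\Gamma))$ is commutative (equivalently $G_{aut}^+(\Gamma)=\mathrm{Aut}(\Gamma)$). *)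

From Stdlib Require Import Reals.
From mathcomp Require Import all_boot.

Set Implicit Arguments.
Unset Strict Implicit.
Unset Printing Implicit Defensive.

Record Cx : Type := mkCx { Cre : R; Cim : R }.
Definition Cadd (a b : Cx) : Cx := mkCx (Rplus (Cre a) (Cre b)) (Rplus (Cim a) (Cim b)).
Definition Cmul (a b : Cx) : Cx :=
  mkCx (Rminus (Rmult (Cre a) (Cre b)) (Rmult (Cim a) (Cim b)))
       (Rplus (Rmult (Cre a) (Cim b)) (Rmult (Cim a) (Cre b))).
Definition Cconj (a : Cx) : Cx := mkCx (Cre a) (Ropp (Cim a)).
Definition Cone : Cx := mkCx R1 R0.
Definition Cmod (a : Cx) : R := sqrt (Rplus (Rmult (Cre a) (Cre a)) (Rmult (Cim a) (Cim a))).

Record CStarAlgebra : Type := {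
  car :> Type;
  zero : car; one : car;
  add : car -> car -> car; opp : car -> car; mul : car -> car -> car;
  scal : Cx -> car -> car; star : car -> car; norm : car -> R;
  addA : forall x y z, add x (add y z) = add (add x y) z;
  addC : forall x y, add x y = add y x;
  add0 : forall x, add zero x = x;
  addN : forall x, add (opp x) x = zero;
  scalDl : forall a b x, scal (Cadd a b) x = add (scal a x) (scal b x);
  scalDr : forall a x y, scal a (add x y) = add (scal a x) (scal a y);
  scalA : forall a b x, scal (Cmul a b) x = scal a (scal b x);
  scal1 : forall x, scal Cone x = x;
  mulA : forall x y z, mul x (mul y z) = mul (mul x y) z;
  mul1l : forall x, mul one x = x;
  mul1r : forall x, mul x one = x;
  mulDl : forall x y z, mul (add x y) z = add (mul x z) (mul y z);
  mulDr : forall x y z, mul x (add y z) = add (mul x y) (mul x z);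
  scalMl : forall a x y, scal a (mul x y) = mul (scal a x) y;
  scalMr : forall a x y, scal a (mul x y) = mul x (scal a y);
  starK : forall x, star (star x) = x;
  starD : forall x y, star (add x y) = add (star x) (star y);
  starM : forall x y, star (mul x y) = mul (star y) (star x);
  starZ : forall a x, star (scal a x) = scal (Cconj a) (star x);
  norm_ge0 : forall x, Rle R0 (norm x);
  norm_eq0 : forall x, norm x = R0 -> x = zero;
  normD : forall x y, Rle (norm (add x y)) (Rplus (norm x) (norm y));
  normZ : forall a x, norm (scal a x) = Rmult (Cmod a) (norm x);
  normM : forall x y, Rle (norm (mul x y)) (Rmult (norm x) (norm y));
  norm_cstar : forall x, norm (mul (star x) x) = Rmult (norm x) (norm x);
  complete : forall u : nat -> car,
    (forall eps : R, Rlt R0 eps -> exists N : nat, forall m n : nat,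
        (N <= m)%coq_nat -> (N <= n)%coq_nat -> Rlt (norm (add (u m) (opp (u n)))) eps) ->
    exists l : car, forall eps : R, Rlt R0 eps -> exists N : nat, forall n : nat,
        (N <= n)%coq_nat -> Rlt (norm (add (u n) (opp l))) eps
}.

(* A family u_ij (i,j in V) in a unital C*-algebra A satisfying (R1)-(R3),
   i.e. a representation of the generators of C(G_aut^+(Gamma)). *)
Definition qaut_relations (V : finType) (adj : rel V) (A : CStarAlgebra)
    (u : V -> V -> A) : Prop :=
  (forall i j, u i j = @star A (u i j) /\ u i j = @mul A (u i j) (u i j)) /\
  (forall i, \big[@add A / zero A]_(l : V) u i l = one A /\
             \big[@add A / zero A]_(l : V) u l i = one A) /\
  (forall i j k l, adj i k != adj j l ->
     @mul A (u i j) (u k l) = zero A /\ @mul A (u k l) (u i j) = zero A).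

(* Since this
   universal C*-algebra is generated by the u_ij and every family satisfying
   (R1)-(R3) in a unital C*-algebra factors through it (and it is itself such a
   family), commutativity is stated via the universal property: in every unital
   C*-algebra, any family satisfying (R1)-(R3) consists of pairwise commuting
   elements. *)
Definition no_quantum_symmetry (V : finType) (adj : rel V) : Prop :=
  forall (A : CStarAlgebra) (u : V -> V -> A), qaut_relations adj u ->
    forall i j k l, @mul A (u i j) (u k l) = @mul A (u k l) (u i j).

(* Ground set {1,...,2k-1} is represented by 'I_(2k-1). *)
Definition odd_vertex (k : nat) : predArgType :=
  {A : {set 'I_(2 * k - 1)} | #|A| == k - 1}.

Definition odd_adj (k : nat) : rel (odd_vertex k) :=
  fun A B => [disjoint val A & val B].

(* Let u satisfy (R1)-(R3) for a graph in which distinct vertices have at most one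
   common neighbour and all degrees are at least 2.  Then the u_ij are projections,
   distinct entries of a row or of a column are orthogonal, and u_ij u_kl = 0 unless
   "i, k are distinct with a common neighbour" holds exactly when it holds for j, l.
   Rows i and k of u commute when i ~ k, by a direct computation, and when i, k are
   distinct with a common neighbour c: if q is a common neighbour of j and l, both
   u_ij u_kl and u_kl u_ij factor through the projections p = u_cq u_ij and
   r = u_cq u_kl, and a sum G of entries of a suitable third row satisfies pr = pGr,
   Gr = Gpr and Gp = Grp; this makes pr idempotent, and an idempotent product of
   projections is a commuting product.  Finally, if i has two neighbours a, a' whose
   rows commute with each other and with row k, then u_ij is a sum of products
   u_ab u_a'b', so row i commutes with row k.

   In O_k this reduces everything to t = |v :&: w|: t = 0 is adjacency, t = k-2 means
   a common neighbour, t = k-1 equality.  The neighbours of v are the sets ~v minus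
   a point z; taking two points z outside v and w, resp. in w but not in v, derives
   the case t from the case k-1-t, resp. k-2-t, and these steps reach every t in the
   order 0, k-1, k-2, 1, k-3, 2, ... *)

From Pilot Require Import Defs.
From Stdlib Require Import Reals Lra.
From HB Require Import structures.
From mathcomp Require Import all_boot ssralg boolp zify.

Set Implicit Arguments.
Unset Strict Implicit.
Unset Printing Implicit Defensive.

(* Equality and choice on a C*-algebra are classical; the ring is "Pz" since A = 0 is allowed. *)
HB.instance Definition _ (A : CStarAlgebra) := gen_eqMixin (car A).
HB.instance Definition _ (A : CStarAlgebra) := gen_choiceMixin (car A).
HB.instance Definition _ (A : CStarAlgebra) :=
  GRing.isPzRing.Build (car A) (@addA A) (@addC A) (@add0 A) (@addN A)
    (@Defs.mulA A) (@mul1l A) (@Defs.mul1r A) (@mulDl A) (@mulDr A).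

Import GRing.Theory.

Section CStarAlgebraTheory.
Local Open Scope ring_scope.
Variable A : CStarAlgebra.
Implicit Types (x y p q g : A) (n : nat).
Local Notation "x ^*" := (@star A x).

Lemma starrM x y : (x * y)^* = y^* * x^*.
Proof. exact: starM. Qed.

Lemma starrK x : x^*^* = x.
Proof. exact: starK. Qed.

Lemma starrD x y : (x + y)^* = x^* + y^*.
Proof. exact: starD. Qed.

Lemma starr0 : (0 : A)^* = 0.
Proof. by apply: (addrI (0 : A)^*); rewrite -starrD !addr0. Qed.

Lemma starrN x : (- x)^* = - x^*.
Proof. by apply/eqP; rewrite -subr_eq0 opprK -starrD addNr starr0. Qed.

Lemma starrB x y : (x - y)^* = x^* - y^*.
Proof. by rewrite starrD starrN. Qed.

Let zeroC := mkCx R0 R0.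

Lemma scalrDl a b x : scal (Cadd a b) x = scal a x + scal b x.
Proof. exact: scalDl. Qed.

Lemma scalrDr a x y : scal a (x + y) = scal a x + scal a y.
Proof. exact: scalDr. Qed.

Lemma scal0r x : scal zeroC x = 0.
Proof.
apply: (addrI (scal zeroC x)); rewrite addr0 -scalrDl.
by congr scal; rewrite /Cadd /= Rplus_0_l.
Qed.

Lemma scalr0 a : scal a (0 : A) = 0.
Proof. by apply: (addrI (scal a 0)); rewrite addr0 -scalrDr addr0. Qed.

Lemma norm0 : norm (0 : A) = R0.
Proof.
rewrite -(scal0r 0) normZ /Cmod /=.
by rewrite Rmult_0_l Rplus_0_l sqrt_0 Rmult_0_l.
Qed.

Lemma cstar_eq0 x : x^* * x = 0 -> x = 0.
Proof.
move=> h; apply: norm_eq0.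
have e : norm (x^* * x) = Rmult (norm x) (norm x) := norm_cstar x.
rewrite h norm0 in e.
by case: (Rmult_integral _ _ (esym e)).
Qed.

Lemma mulrn_scal x n : x *+ n = scal (mkCx (INR n) R0) x.
Proof.
elim: n => [|n IH]; first by rewrite mulr0n scal0r.
rewrite mulrS IH -{1}(scal1 x) -scalrDl S_INR.
by congr scal; rewrite /Cadd /=; congr mkCx; lra.
Qed.

Lemma mulrSn_eq0 x n : x *+ n.+1 = 0 -> x = 0.
Proof.
rewrite mulrn_scal => h.
have n1_neq0 : INR n.+1 <> R0 by apply: not_0_INR.
rewrite -[x]scal1 -(scalr0 (mkCx (Rinv (INR n.+1)) R0)) -h -scalA.
by congr scal; rewrite /Cmul /Cone /=; congr mkCx; field.
Qed.

Definition is_proj p := p^* = p /\ p * p = p.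

Lemma is_projM p q : is_proj p -> is_proj q -> p * q = q * p -> is_proj (p * q).
Proof.
move=> [sp pp] [sq qq] pq; split; first by rewrite starrM sp sq pq.
by rewrite mulrA -[p * q * p]mulrA -pq mulrA pp -mulrA qq.
Qed.

Lemma proj_commute_of_absorb p q :
  is_proj p -> is_proj q -> p * q = p * q * p -> p * q = q * p.
Proof.
move=> [sp _] [sq _] h.
by rewrite -[q * p]starrK starrM sp sq h !starrM sp sq mulrA.
Qed.

Lemma proj_commute_of_idem p q :
  is_proj p -> is_proj q -> p * q * (p * q) = p * q -> p * q = q * p.
Proof.
move=> [sp pp] [sq qq] idem.
have pqp_adj : (p * q * p)^* = p * q * p by rewrite !starrM sp sq mulrA.
suff qp_eq : q * p = p * q * p by rewrite qp_eq -pqp_adj -qp_eq starrM sp sq.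
apply/eqP; rewrite -subr_eq0; apply/eqP/cstar_eq0.
rewrite starrB pqp_adj starrM sp sq mulrBl !mulrBr !mulrA.
rewrite -[p * q * q]mulrA qq -[p * q * p * p]mulrA pp.
by rewrite -[p * q * p * q]mulrA idem !subrr.
Qed.

Lemma proj_commute_of_sandwich p q g :
  is_proj p -> is_proj q -> p * q = p * g * q ->
  g * q = g * p * q -> g * p = g * q * p -> p * q = q * p.
Proof.
move=> hp hq pgq gq gp; apply: proj_commute_of_idem => //.
apply/esym; rewrite {1}pgq -[p * g * q]mulrA gq !mulrA.
by rewrite -[p * g * p]mulrA gp !mulrA -pgq.
Qed.

End CStarAlgebraTheory.

Section PartitionOfUnity.
Local Open Scope ring_scope.
Variables (R : pzRingType) (I : finType) (e : I -> R).
Hypothesis e_sum1 : \sum_y e y = 1.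

Lemma mul_partition1_filter (Q : pred I) a b :
  (forall y, ~~ Q y -> a * e y * b = 0) -> a * b = \sum_(y | Q y) a * e y * b.
Proof.
move=> hQ; have -> : a * b = a * (\sum_y e y) * b by rewrite e_sum1 mulr1.
rewrite mulr_sumr mulr_suml [RHS]big_mkcond /=.
by apply: eq_bigr => y _; case: ifP => // /negbT /hQ.
Qed.

Lemma mul_partition1_single y0 a b :
  (forall y, y != y0 -> a * e y * b = 0) -> a * b = a * e y0 * b.
Proof. by move=> h; rewrite (@mul_partition1_filter (pred1 y0)) ?big_pred1_eq. Qed.

Lemma mul_partition1_eq0 a b : (forall y, a * e y * b = 0) -> a * b = 0.
Proof. by move=> h; rewrite (@mul_partition1_filter pred0) ?big_pred0. Qed.

End PartitionOfUnity.

Section QuantumAutomorphisms.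
Local Open Scope ring_scope.
Variables (V : finType) (adj : rel V).
Hypothesis adjC : symmetric adj.
Hypothesis common_nbr_uniq : forall a b c c',
  a != b -> adj a c -> adj c b -> adj a c' -> adj c' b -> c = c'.
Hypothesis deg_gt1 : forall i, 1 < #|adj i|.

Definition cnbr x y := [exists z, adj x z && adj z y].
Definition two_path x y := cnbr x y && (x != y).

Lemma cnbrC : symmetric cnbr.
Proof.
move=> x y; apply/existsP/existsP => -[z /andP[xz zy]];
  by exists z; rewrite adjC andbC adjC xz zy.
Qed.

Lemma two_pathC : symmetric two_path.
Proof. by move=> x y; rewrite /two_path cnbrC eq_sym. Qed.

Section Family.
Variables (A : CStarAlgebra) (u : V -> V -> A).
Hypothesis Hu : qaut_relations adj u.

Lemma u_proj i j : is_proj (u i j).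
Proof. by have [s m] := Hu.1 i j; split; apply/esym. Qed.

Lemma u_row_sum i : \sum_l u i l = 1.
Proof. exact: (Hu.2.1 i).1. Qed.

Lemma u_col_sum i : \sum_l u l i = 1.
Proof. exact: (Hu.2.1 i).2. Qed.

Lemma u_mul_eq0 i j k l : adj i k != adj j l -> u i j * u k l = 0.
Proof. by move=> h; case: (Hu.2.2 i j k l h). Qed.

Lemma u_mul3_eq0 i c k j y l :
  adj i c -> adj c k -> ~~ (adj j y && adj y l) -> u i j * u c y * u k l = 0.
Proof.
move=> ic ck; case/nandP => [jy | yl].
  by rewrite u_mul_eq0 ?mul0r // ic (negbTE jy).
by rewrite -mulrA u_mul_eq0 ?mulr0 // ck (negbTE yl).
Qed.

Lemma u_row_orth i l m : l != m -> u i l * u i m = 0.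
Proof.
move=> lm; set x := u i l * u i m.
have [k1 ik1] : exists k1, adj i k1.
  by have /card_gt1P[k1 [_ [ik1 _ _]]] := deg_gt1 i; exists k1.
case: (pickP (fun p => adj l p && adj p m)) => [p0 /andP[lp0 p0m] | no_cnbr]; last first.
  rewrite /x; apply: (mul_partition1_eq0 (u_row_sum k1)) => y.
  by apply: u_mul3_eq0; rewrite ?no_cnbr // adjC.
(* Every u_(k p0) with k ~ i acts trivially between u_il and u_im, so x = deg(i) x. *)
have through_p0 k : adj i k -> u i l * u k p0 * u i m = x.
  move=> ik; apply/esym/(mul_partition1_single (u_row_sum k)) => y yp0.
  apply: u_mul3_eq0 => //; first by rewrite adjC.
  apply/negP => /andP[ly ym].
  by case/eqP: yp0; apply: (common_nbr_uniq lm).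
have : x = x *+ #|adj i|.
  rewrite -sumr_const {1}/x (mul_partition1_filter (u_col_sum p0) (Q := adj i)) => [|k ik].
    by apply: eq_big => // k ik; rewrite through_p0.
  by rewrite u_mul_eq0 ?mul0r // (negbTE ik) lp0.
have := deg_gt1 i; case: #|adj i| => [|[|n]] // _; rewrite mulrS => e.
by apply: (@mulrSn_eq0 _ _ n); apply: (addrI x); rewrite addr0 -e.
Qed.

Lemma cnbr_u_mul_eq0 i j k l : cnbr i k -> ~~ cnbr j l -> u i j * u k l = 0.
Proof.
case/existsP=> c /andP[ic ck] jl; apply: (mul_partition1_eq0 (u_row_sum c)) => y.
by apply: u_mul3_eq0 => //; apply: contra jl => jyl; apply/existsP; exists y.
Qed.

End Family.

Lemma qaut_relations_tr (A : CStarAlgebra) (u : V -> V -> A) :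
  qaut_relations adj u -> qaut_relations adj (fun i j => u j i).
Proof.
move=> [proj [sums orth]]; split=> [i j|]; first exact: proj.
split=> [i|i j k l h]; first by case: (sums i).
by apply: orth; rewrite eq_sym.
Qed.

Section Commutation.
Variables (A : CStarAlgebra) (u : V -> V -> A).
Hypothesis Hu : qaut_relations adj u.

Let Hut := qaut_relations_tr Hu.

Lemma u_col_orth i l m : l != m -> u l i * u m i = 0.
Proof. exact: (u_row_orth Hut). Qed.

Definition respects (r : rel V) := forall i j k l, r i k != r j l -> u i j * u k l = 0.

Lemma respects_two_path : respects two_path.
Proof.
move=> i j k l; rewrite /two_path.
case: (boolP (cnbr i k)) => ik; case: (boolP (cnbr j l)) => jl /=.
- case: (eqVneq i k) => [<-|ik']; case: (eqVneq j l) => [<-|jl'] //= _.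
    exact: u_row_orth.
  exact: u_col_orth.
- by move=> _; apply: (cnbr_u_mul_eq0 Hu).
- by move=> _; apply: (cnbr_u_mul_eq0 Hut).
- by [].
Qed.

Definition rows_commute i k := forall j l, u i j * u k l = u k l * u i j.

Lemma rows_commute_adj i k : adj i k -> rows_commute i k.
Proof.
move=> ik j l; apply: proj_commute_of_absorb; [exact: u_proj | exact: u_proj |].
rewrite -[LHS]mulr1 (mul_partition1_single (u_row_sum Hu i) (y0 := j)) ?mulr1 // => j' j'j.
rewrite mulr1; case: (boolP (adj j l && adj l j')) => [/andP[jl lj'] | ]; last first.
  by apply: u_mul3_eq0 => //; rewrite adjC.
have jj' : j != j' by rewrite eq_sym.
rewrite -(u_row_orth Hu i jj').
apply/esym/(mul_partition1_single (u_row_sum Hu k) (y0 := l)) => y yl.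
apply: u_mul3_eq0 => //; first by rewrite adjC.
apply/negP => /andP[jy yj']; case/eqP: yl.
by apply: (common_nbr_uniq _ jy yj' jl lj'); rewrite eq_sym.
Qed.

Lemma u_mul_cnbr i k c j l q : adj i c -> adj c k -> adj j q -> adj q l -> j != l ->
  u i j * u k l = u c q * (u i j * u k l).
Proof.
move=> ic ck jq ql jl; transitivity (u i j * u c q * u k l).
  apply: (mul_partition1_single (u_row_sum Hu c)) => y yq.
  apply: u_mul3_eq0 => //; apply/negP => /andP[jy yl].
  by case/eqP: yq; apply: (common_nbr_uniq jl).
by rewrite -(@rows_commute_adj c i _ q j) 1?adjC // mulrA.
Qed.

Section TwoPath.
Hypothesis two_path_fan : forall j l q y f, j != l -> adj q j -> adj q l -> adj q y ->
  y != j -> y != l -> two_path j f -> ~~ adj q f -> two_path f l -> ~~ two_path f y.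

Section Configuration.
Variables (i k c j l q e : V).
Hypotheses (ik : i != k) (ic : adj i c) (ck : adj c k).
Hypotheses (jl : j != l) (jq : adj j q) (ql : adj q l).
Hypotheses (ei : two_path e i) (ek : two_path e k) (ec : ~~ adj e c).

Let P := u c q.
Let G := \sum_(f | two_path j f && ~~ adj q f && two_path f l) u e f.
Let p := P * u i j.
Let r := P * u k l.

Let P_commute m y : adj c m -> P * u m y = u m y * P.
Proof. by move=> cm; apply: rows_commute_adj. Qed.

Let ci : adj c i.
Proof. by rewrite adjC. Qed.

Let P_idem : P * P = P.
Proof. by case: (u_proj Hu c q). Qed.

Lemma G_mulP m : two_path e m -> adj c m -> G * P = G * P * u m j + G * P * u m l.
Proof.
move=> em cm; rewrite -mulrDr -[LHS]mulr1.
rewrite (mul_partition1_filter (u_row_sum Hu m) (Q := pred2 j l)) => [|y]; last first.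
  rewrite /= negb_or => /andP[yj yl]; rewrite mulr1.
  have [qy|nqy] := boolP (adj q y); last first.
    by rewrite -mulrA u_mul_eq0 ?mulr0 // cm (negbTE nqy).
  rewrite -mulrA P_commute // mulrA mulr_suml big1 ?mul0r // => f /andP[/andP[jf nqf] fl].
  apply: respects_two_path; rewrite em.
  by rewrite (negbTE (two_path_fan jl _ ql qy yj yl jf nqf fl)) // adjC.
rewrite (bigD1 j) /= ?eqxx // (bigD1 l) /= ?eqxx ?orbT 1?eq_sym //.
rewrite big1 => [|y]; last by case: (y == j); case: (y == l).
by rewrite addr0 !mulr1 mulrDr.
Qed.

Lemma G_mul_r : G * r = G * p * r.
Proof.
rewrite /r mulrA (G_mulP ei ci) mulrDl -!mulrA u_col_orth // !mulr0 addr0.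
rewrite /p !mulrA -[G * P * u i j * P]mulrA -(P_commute _ ci) mulrA.
by rewrite -[G * P * P]mulrA P_idem.
Qed.

Lemma G_mul_p : G * p = G * r * p.
Proof.
rewrite /p mulrA (G_mulP ek ck) mulrDl -!mulrA u_col_orth 1?eq_sym // !mulr0 add0r.
rewrite /r !mulrA -[G * P * u k l * P]mulrA -(P_commute _ ck) mulrA.
by rewrite -[G * P * P]mulrA P_idem.
Qed.

Lemma p_mul_r : p * r = p * G * r.
Proof.
rewrite /G mulr_sumr mulr_suml; apply: (mul_partition1_filter (u_row_sum Hu e)) => f.
case/nandP => [/nandP[jf | /negbNE qf] | fl].
- rewrite /p -[P * u i j * u e f]mulrA respects_two_path ?mulr0 ?mul0r //.
  by rewrite [two_path i e]two_pathC ei (negbTE jf).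
- rewrite /p (P_commute _ ci) -[u i j * P * u e f]mulrA u_mul_eq0 ?mulr0 ?mul0r //.
  by rewrite qf adjC (negbTE ec).
- rewrite /r (P_commute _ ck) mulrA -[p * u e f * u k l]mulrA.
  rewrite respects_two_path ?mulr0 ?mul0r //.
  by rewrite ek (negbTE fl).
Qed.

Lemma u_mul_eq_pr : u i j * u k l = p * r.
Proof.
rewrite /p /r (u_mul_cnbr ic ck jq ql jl) !mulrA -[P * u i j * P]mulrA.
by rewrite -(P_commute _ ci) mulrA P_idem.
Qed.

Lemma u_mul_eq_rp : u k l * u i j = r * p.
Proof.
have [kc lq qj] : [/\ adj k c, adj l q & adj q j] by split; rewrite adjC.
rewrite /p /r (u_mul_cnbr kc ci lq qj) 1?eq_sym // !mulrA -[P * u k l * P]mulrA.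
by rewrite -(P_commute _ ck) mulrA P_idem.
Qed.

Lemma u_commute_two_path_config : u i j * u k l = u k l * u i j.
Proof.
have p_proj : is_proj p := is_projM (u_proj Hu c q) (u_proj Hu i j) (P_commute _ ci).
have r_proj : is_proj r := is_projM (u_proj Hu c q) (u_proj Hu k l) (P_commute _ ck).
rewrite u_mul_eq_pr u_mul_eq_rp.
exact: (proj_commute_of_sandwich p_proj r_proj p_mul_r G_mul_r G_mul_p).
Qed.

End Configuration.

Hypothesis two_path_witness : forall i k c, i != k -> adj i c -> adj c k ->
  exists e, [&& two_path e i, two_path e k & ~~ adj e c].

Lemma rows_commute_two_path i k : two_path i k -> rows_commute i k.
Proof.
move=> ik_path j l; have [jl_path|njl_path] := boolP (two_path j l); last first.
  rewrite !respects_two_path // ?ik_path ?(negbTE njl_path) //.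
  by rewrite [two_path k i]two_pathC [two_path l j]two_pathC ik_path (negbTE njl_path).
case/andP: ik_path => /existsP[c /andP[ic ck]] ik.
case/andP: jl_path => /existsP[q /andP[jq ql]] jl.
have [e /and3P[ei ek ec]] := two_path_witness ik ic ck.
exact: (u_commute_two_path_config ik ic ck jl jq ql ei ek ec).
Qed.

End TwoPath.

Section Neighbours.
Variables (i a a' : V).
Hypotheses (aa' : a != a') (ia : adj i a) (ia' : adj i a') (rows_aa' : rows_commute a a').

Lemma u_mul_nbr_pair j b1 b2 : adj j b1 -> adj j b2 ->
  u i j * u a b1 * u a' b2 = u a b1 * u a' b2.
Proof.
move=> jb1 jb2; rewrite -mulrA; apply/esym.
rewrite -[LHS]mul1r (mul_partition1_single (u_row_sum Hu i) (y0 := j)) ?mul1r // => j' j'j.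
rewrite mul1r; have [j'b1|nj'b1] := boolP (adj j' b1); last first.
  by rewrite mulrA u_mul_eq0 ?mul0r // ia (negbTE nj'b1).
have [j'b2|nj'b2] := boolP (adj j' b2); last first.
  by rewrite rows_aa' mulrA u_mul_eq0 ?mul0r // ia' (negbTE nj'b2).
have [<-|b12] := eqVneq b1 b2; first by rewrite u_col_orth ?mulr0.
by case/eqP: j'j; apply: (common_nbr_uniq b12); rewrite // adjC.
Qed.

Lemma u_eq_sum_nbr_pairs j :
  u i j = \sum_(b1 | adj j b1) \sum_(b2 | adj j b2) u a b1 * u a' b2.
Proof.
rewrite -[LHS]mulr1.
rewrite (mul_partition1_filter (u_row_sum Hu a) (Q := adj j)) => [|b1 jb1]; last first.
  by rewrite mulr1 u_mul_eq0 // ia (negbTE jb1).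
apply: eq_bigr => b1 jb1; rewrite mulr1 -[LHS]mulr1.
rewrite (mul_partition1_filter (u_row_sum Hu a') (Q := adj j)) => [|b2 jb2]; last first.
  by rewrite mulr1 -mulrA rows_aa' mulrA u_mul_eq0 ?mul0r // ia' (negbTE jb2).
by apply: eq_bigr => b2 jb2; rewrite mulr1 u_mul_nbr_pair.
Qed.

Lemma rows_commute_of_nbrs k : rows_commute a k -> rows_commute a' k -> rows_commute i k.
Proof.
move=> rows_ak rows_a'k j l; rewrite u_eq_sum_nbr_pairs mulr_suml mulr_sumr.
apply: eq_bigr => b1 _; rewrite mulr_suml mulr_sumr; apply: eq_bigr => b2 _.
by rewrite -mulrA rows_a'k mulrA rows_ak -mulrA.
Qed.

End Neighbours.
End Commutation.
End QuantumAutomorphisms.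

Section FinsetFacts.
Variable T : finType.
Implicit Types (A B : {set T}) (z : T).

Lemma subset_card_eq A B : A \subset B -> #|B| <= #|A| -> A = B.
Proof. by move=> AB BA; apply/eqP; rewrite eqEcard AB BA. Qed.

Lemma setCD1I A B z : (~: A :\ z) :&: B = (B :\: A) :\ z.
Proof.
by apply/setP => x; rewrite !inE; case: (x == z); case: (x \in A); case: (x \in B).
Qed.

End FinsetFacts.

Section OddGraph.
Variable k : nat.
Hypothesis k_ge2 : 2 <= k.
Local Notation N := 'I_(2 * k - 1).
Local Notation V := (odd_vertex k).
Local Notation adjO := (@odd_adj k).
Implicit Types (v w x : V) (S : {set N}).

Lemma card_vertex v : #|val v| = k - 1.
Proof. exact/eqP/(valP v). Qed.

Lemma vertex_of_card S : #|S| = k - 1 -> exists v : V, val v = S.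
Proof. by move=> /eqP S_card; exists (exist _ S S_card). Qed.

Lemma card_setC_ord S : #|~: S| = 2 * k - 1 - #|S|.
Proof. by rewrite cardsCs setCK card_ord. Qed.

Lemma odd_adjC : symmetric adjO.
Proof. by move=> v w; rewrite /odd_adj disjoint_sym. Qed.

Lemma odd_nbr_subset v w : adjO v w -> val w \subset ~: val v.
Proof. by rewrite /odd_adj disjoint_sym disjoints_subset. Qed.

Lemma card_setU_vertex v w : v != w -> k <= #|val v :|: val w|.
Proof.
move=> vw; rewrite leqNgt; apply/negP => small.
have vUw : val v :|: val w = val v.
  apply/esym/subset_card_eq; first exact: subsetUl.
  by rewrite card_vertex; move: small; clear -k_ge2; lia.
have wv : val w = val v.
  by apply: subset_card_eq; rewrite ?card_vertex // -vUw subsetUr.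
by move: vw; rewrite (val_inj wv) eqxx.
Qed.

Lemma odd_cnbr_set v w x : v != w -> adjO v x -> adjO x w -> val x = ~: (val v :|: val w).
Proof.
move=> vw vx xw; apply: subset_card_eq.
  have wx : adjO w x by rewrite odd_adjC.
  by rewrite setCU subsetI (odd_nbr_subset vx) (odd_nbr_subset wx).
by rewrite card_setC_ord card_vertex; have := card_setU_vertex vw; clear -k_ge2; lia.
Qed.

Lemma odd_common_nbr_uniq v w x x' :
  v != w -> adjO v x -> adjO x w -> adjO v x' -> adjO x' w -> x = x'.
Proof.
move=> vw vx xw vx' x'w; apply: val_inj.
by rewrite (odd_cnbr_set vw vx xw) (odd_cnbr_set vw vx' x'w).
Qed.

Lemma odd_nbr_of_point v z : z \notin val v ->
  exists2 a : V, val a = ~: val v :\ z & adjO v a.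
Proof.
move=> zv; have [a ea] : exists a : V, val a = ~: val v :\ z.
  apply: vertex_of_card; have := cardsD1 z (~: val v).
  rewrite inE zv card_setC_ord card_vertex.
  by move: (#|_ :\ z|) => m; clear -k_ge2; lia.
exists a => //; rewrite /odd_adj ea disjoint_sym disjoints_subset.
by apply/subsetP => x; rewrite !inE => /andP[].
Qed.

Lemma odd_nbrs_of_points v z1 z2 : z1 != z2 -> z1 \notin val v -> z2 \notin val v ->
  exists a1 a2 : V, [/\ val a1 = ~: val v :\ z1, val a2 = ~: val v :\ z2,
                       adjO v a1, adjO v a2 & a1 != a2].
Proof.
move=> z12 z1v z2v.
have [a1 e1 va1] := odd_nbr_of_point z1v; have [a2 e2 va2] := odd_nbr_of_point z2v.
exists a1, a2; split => //; apply/negP => /eqP a12.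
have : z1 \in val a2 by rewrite e2 !inE z12 z1v.
by rewrite -a12 e1 !inE eqxx.
Qed.

Lemma odd_deg_gt1 v : 1 < #|adjO v|.
Proof.
have : 1 < #|~: val v| by rewrite card_setC_ord card_vertex; clear -k_ge2; lia.
case/card_gt1P => z1 [z2 [z1v z2v z12]]; rewrite !inE in z1v z2v.
have [a1 [a2 [_ _ va1 va2 a12]]] := odd_nbrs_of_points z12 z1v z2v.
by apply/card_gt1P; exists a1, a2.
Qed.

Lemma two_path_card v w : two_path adjO v w -> #|val v :&: val w| = k - 2.
Proof.
case/andP => /existsP[x /andP[vx xw]] vw; have := card_setU_vertex vw.
have := cardsUI (val v) (val w); have := card_vertex x.
rewrite (odd_cnbr_set vw vx xw) card_setC_ord !card_vertex.
by move: #|val v :|: val w| #|val v :&: val w| => a b; clear -k_ge2; lia.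
Qed.

Lemma card_two_path v w : #|val v :&: val w| = k - 2 -> two_path adjO v w.
Proof.
move=> vw_card.
have vUw_card : #|val v :|: val w| = k.
  have := cardsUI (val v) (val w); rewrite vw_card !card_vertex.
  by move: #|_ :|: _| => a; clear -k_ge2; lia.
have [x ex] : exists x : V, val x = ~: (val v :|: val w).
  by apply: vertex_of_card; rewrite card_setC_ord vUw_card; clear -k_ge2; lia.
apply/andP; split.
  apply/existsP; exists x; rewrite /odd_adj ex.
  by rewrite disjoints_subset setCK subsetUl disjoint_sym disjoints_subset setCK subsetUr.
apply/negP => /eqP vw; move: vw_card; rewrite vw setIid card_vertex.
by clear -k_ge2; lia.
Qed.

Lemma odd_common_nbr_split q v w : v != w -> adjO q v -> adjO q w ->
  val v :|: val w = ~: val q /\ #|val v :&: val w| = k - 2.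
Proof.
move=> vw qv qw.
have vUw : val v :|: val w = ~: val q.
  apply: subset_card_eq.
    by rewrite subUset (odd_nbr_subset qv) (odd_nbr_subset qw).
  rewrite card_setC_ord card_vertex.
  by have := card_setU_vertex vw; move: #|_ :|: _| => x; clear -k_ge2; lia.
split => //; have := cardsUI (val v) (val w).
rewrite vUw card_setC_ord !card_vertex.
by move: #|_ :&: _| => x; clear -k_ge2; lia.
Qed.

Lemma odd_two_path_witness v w x : v != w -> adjO v x -> adjO x w ->
  exists e, [&& two_path adjO e v, two_path adjO e w & ~~ adjO e x].
Proof.
move=> vw vx xw; have xv : adjO x v by rewrite odd_adjC.
have [_ vw_card] := odd_common_nbr_split vw xv xw.
have /card_gt0P[z zx] : 0 < #|val x| by rewrite card_vertex; clear -k_ge2; lia.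
have zNv : z \notin val v.
  by apply: contraL zx => /(subsetP (odd_nbr_subset xv)); rewrite inE.
have zNw : z \notin val w.
  by apply: contraL zx => /(subsetP (odd_nbr_subset xw)); rewrite inE.
have [e ez] : exists e : V, val e = z |: (val v :&: val w).
  apply: vertex_of_card; rewrite cardsU1 inE negb_and zNv vw_card.
  by clear -k_ge2; lia.
have z_meet S : z \notin S -> [set z] :&: S = set0.
  by move=> zS; apply/eqP; rewrite setI_eq0 disjoints1.
exists e; apply/and3P; split.
- by apply: card_two_path; rewrite ez setIUl z_meet // set0U setIAC setIid.
- by apply: card_two_path; rewrite ez setIUl z_meet // set0U -setIA setIid.
- rewrite /odd_adj ez -setI_eq0; apply/set0Pn; exists z.
  by rewrite !inE eqxx zx.
Qed.

Lemma odd_meet_outside q v w : adjO q v -> ~~ adjO q w -> two_path adjO v w ->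
  val w :&: val v = val w :&: ~: val q.
Proof.
move=> qv qw vw; apply: subset_card_eq; first by rewrite setIS // odd_nbr_subset.
have : 0 < #|val w :&: val q| by rewrite card_gt0 setI_eq0 disjoint_sym.
have := cardsID (val q) (val w).
rewrite setDE [val w :&: val v]setIC (two_path_card vw) card_vertex.
by move: #|_ :&: val q| #|_ :&: ~: _| => a b; clear -k_ge2; lia.
Qed.

Lemma odd_two_path_fan j l q y f : j != l -> adjO q j -> adjO q l -> adjO q y ->
  y != j -> y != l -> two_path adjO j f -> ~~ adjO q f -> two_path adjO f l ->
  ~~ two_path adjO f y.
Proof.
move=> jl qj ql qy yj yl jf qf fl; apply/negP => fy.
set X := val f :&: ~: val q.
have fjX : val f :&: val j = X := odd_meet_outside qj qf jf.
have flX : val f :&: val l = X.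
  by apply: odd_meet_outside => //; rewrite (two_pathC odd_adjC).
have fyX : val f :&: val y = X.
  by apply: odd_meet_outside => //; rewrite (two_pathC odd_adjC).
have X_card : #|X| = k - 2 by rewrite -fjX setIC two_path_card.
have meet_j v : v != j -> adjO q v -> val f :&: val v = X -> val j :&: val v = X.
  move=> vj qv fvX; apply/esym/subset_card_eq.
    by rewrite subsetI -{1}fjX -fvX !subsetIr.
  by rewrite X_card (odd_common_nbr_split _ qj qv).2 // eq_sym.
have jX : val j = X.
  rewrite -[val j](setIidPl (odd_nbr_subset qj)).
  rewrite -(odd_common_nbr_split _ ql qy).1 1?eq_sym //.
  by rewrite setIUr (meet_j l) ?(meet_j y) ?setUid // eq_sym.
by have := card_vertex j; rewrite jX X_card; clear -k_ge2; lia.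
Qed.

Section OddRows.
Variables (A : CStarAlgebra) (u : V -> V -> A).
Hypothesis Hu : qaut_relations adjO u.

Definition commute_at t := forall v w : V, #|val v :&: val w| = t -> rows_commute u v w.

Lemma commute_at_disjoint : commute_at 0.
Proof.
move=> v w /eqP; rewrite cards_eq0 setI_eq0 => vw.
exact: (rows_commute_adj odd_adjC odd_common_nbr_uniq odd_deg_gt1 Hu vw).
Qed.

Lemma commute_at_eq : commute_at (k - 1).
Proof.
move=> v w vw_card j l.
have vw : val v = val w.
  apply: subset_card_eq; last by rewrite !card_vertex.
  by apply/setIidPl/subset_card_eq; rewrite ?subsetIl // vw_card card_vertex.
rewrite -(val_inj vw); have [<-|jl] := eqVneq j l; first by [].
have u_orth := u_row_orth odd_adjC odd_common_nbr_uniq odd_deg_gt1 Hu v.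
by rewrite !u_orth // eq_sym.
Qed.

Lemma commute_at_two_path : commute_at (k - 2).
Proof.
move=> v w /card_two_path.
exact: (rows_commute_two_path odd_adjC odd_common_nbr_uniq odd_deg_gt1 Hu
          odd_two_path_fan odd_two_path_witness).
Qed.

Lemma commute_via_points v w (S : {set N}) : S \subset ~: val v -> 1 < #|S| ->
  (forall z a, z \in S -> val a = ~: val v :\ z -> rows_commute u a w) ->
  rows_commute u v w.
Proof.
move=> Sv /card_gt1P[z1 [z2 [z1S z2S z12]]] nbr_commute.
have z1v : z1 \notin val v by have := subsetP Sv z1 z1S; rewrite inE.
have z2v : z2 \notin val v by have := subsetP Sv z2 z2S; rewrite inE.
have [a1 [a2 [e1 e2 va1 va2 a12]]] := odd_nbrs_of_points z12 z1v z2v.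
apply: (rows_commute_of_nbrs odd_adjC odd_common_nbr_uniq odd_deg_gt1 Hu a12 va1 va2).
- apply: commute_at_two_path; apply: two_path_card; rewrite /two_path a12 andbT.
  by apply/existsP; exists v; rewrite va2 odd_adjC va1.
- exact: nbr_commute e1.
- exact: nbr_commute e2.
Qed.

Lemma commute_at_of_sub2 t : t + 3 <= k -> commute_at (k - 2 - t) -> commute_at t.
Proof.
move=> tk IH v w vw_card.
have wv_card : #|val w :\: val v| = k - 1 - t by rewrite cardsD setIC vw_card card_vertex.
apply: (@commute_via_points _ _ (val w :\: val v)).
- by apply/subsetP => x; rewrite !inE => /andP[].
- by rewrite wv_card; clear -k_ge2 tk; lia.
move=> z a zS ea; apply: IH; rewrite ea setCD1I.
have := cardsD1 z (val w :\: val v); rewrite zS wv_card.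
by move: #|_ :\ z| => m; clear -k_ge2; lia.
Qed.

Lemma commute_at_of_sub1 t : 0 < t -> commute_at (k - 1 - t) -> commute_at t.
Proof.
move=> t_gt0 IH v w vw_card.
have wv_card : #|val w :\: val v| = k - 1 - t by rewrite cardsD setIC vw_card card_vertex.
have t_le : t <= k - 1.
  by have := subset_leq_card (subsetIl (val v) (val w)); rewrite vw_card card_vertex.
have S_card : #|~: val v :\: val w| = t + 1.
  rewrite cardsD setIC -setDE wv_card card_setC_ord card_vertex.
  by clear -k_ge2 t_gt0 t_le; lia.
apply: (@commute_via_points _ _ (~: val v :\: val w)).
- by apply/subsetP => x; rewrite !inE => /andP[].
- by rewrite S_card; clear -t_gt0; lia.
move=> z a zS ea; apply: IH.
have zw : z \notin val w by move: zS; rewrite !inE => /andP[].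
have wvz : (val w :\: val v) :\ z = val w :\: val v.
  by apply/setDidPl; rewrite disjoint_sym disjoints1 !inE (negbTE zw) andbF.
by rewrite ea setCD1I wvz.
Qed.

Lemma commute_at_pair s : s <= k - 1 -> commute_at s /\ commute_at (k - 1 - s).
Proof.
elim: s => [|s IH] s_le.
  by rewrite subn0; split; [exact: commute_at_disjoint | exact: commute_at_eq].
have [IH1 _] := IH (ltnW s_le).
have IH2 : commute_at (k - 1 - s.+1).
  case: s IH IH1 s_le => [|s] _ IH1 s_le.
    have -> : k - 1 - 1 = k - 2 by clear -k_ge2; lia.
    exact: commute_at_two_path.
  apply: commute_at_of_sub2; first by clear -k_ge2 s_le; lia.
  by have -> : k - 2 - (k - 1 - s.+2) = s.+1 by clear -k_ge2 s_le; lia.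
by split=> //; apply: commute_at_of_sub1.
Qed.

Lemma odd_rows_commute v w : rows_commute u v w.
Proof.
have vw_le : #|val v :&: val w| <= k - 1.
  by have := subset_leq_card (subsetIl (val v) (val w)); rewrite card_vertex.
exact: (commute_at_pair vw_le).1.
Qed.

End OddRows.
End OddGraph.

Theorem theorem1p1 : forall k : nat, 2 <= k -> no_quantum_symmetry (@odd_adj k).
Proof.
move=> k k_ge2 A u Hu i j k' l.
exact: (odd_rows_commute k_ge2 Hu i k' j l).
Qed.
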